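(* For $n\in\mathbb{N}^\star$ let $\phi_n(x)=\int_0^\pi e^{-2x\sin\eta}e^{2in\eta}\,\mathrm{d}\eta$ and define $\varphi_n(x)=n\,\phi_n(nx)$ for $x>0$. Define functions $\Psi_k$ on $(0,\infty)$ by $$\Psi_0(x)=\frac{x}{1+x^2},\qquad \Psi_{k+1}(x)=\frac{x^2}{4(1+x^2)}\Big(\Psi_k''(x)+\frac1x\Psi_k'(x)\Big),\quad k\in\mathbb{N}.$$ For $n\ge1$ and $N\in\mathbb{N}$ define $g_{n,N}$ by $\varphi_n(x)=\sum_{k=0}^N n^{-2k}\Psi_k(x)+g_{n,N}(x)$, $x>0$. Then for every $N\in\mathbb{N}$ and $\delta\in[0,\tfrac13)$ there is a constant $C=C(N,\delta)>0$, independent of $n$ and $x$, such that $$|g_{n,N}(x)|\le\frac{C}{n^{2N+\frac23-\delta}}\,\frac{x^\delta}{1+x}\qquad\text{for all }x>0,\ n\ge1.$$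
   Context: $\mathbb{N}=\{0,1,2,\dots\}$, $\mathbb{N}^\star=\{1,2,\dots\}$. *)

From Stdlib Require Import Reals.
From Coquelicot Require Import Coquelicot.
Open Scope R_scope.

Definition expi (t : R) : C := (cos t, sin t).

Definition phi (n : nat) (x : R) : C :=
  @RInt C_R_CompleteNormedModule (fun eta : R => Cmult (RtoC (exp (-2 * x * sin eta))) (expi (2 * INR n * eta))) 0 PI.

Definition varphi (n : nat) (x : R) : C := Cmult (RtoC (INR n)) (phi n (INR n * x)).

Fixpoint Psi (k : nat) : R -> R :=
  match k with
  | O => fun x => x / (1 + x ^ 2)
  | S k' => fun x => x ^ 2 / (4 * (1 + x ^ 2)) *
              (Derive_n (Psi k') 2 x + / x * Derive (Psi k') x)
  end.

Definition g (n N : nat) (x : R) : C :=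
  Cminus (varphi n x) (RtoC (sum_f_R0 (fun k => / (INR n) ^ (2 * k) * Psi k x) N)).

(* phi_n(y) is real and equals J_0(y), where
   J_m(y) = \int_0^PI sin^m t e^{-2 y sin t} cos (2 n t) dt:
   the imaginary part is odd under t |-> PI - t.  Two integrations by parts give
   4 n^2 J_0 + 4 y^2 (J_0 - J_2) + 2 y J_1 = 4 y.
   With the scaled moments k_m(x) = n (n x)^m J_m(n x), so that k_0 = varphi_n,
   the Euler operator theta = x d/dx acts by theta k_m = m k_m - 2 k_(m+1), and the
   identity becomes varphi_n = Psi_0 + n^-2 L varphi_n, where
   L f = u theta^2 f / 4, u = 1/(1+x^2), is the operator of the recursion
   Psi_(k+1) = L Psi_k.  Since L is linear, g_(n,N) = n^(-2N-2) L^(N+1) varphi_n,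
   and L^(N+1) varphi_n is a sum of terms r(x) k_m(x) with m >= 1 and r a
   polynomial in u.  Finally y^m sin^m t e^{-2 y sin t} <= C (y sin t) e^{-y sin t},
   whose integral over [0, PI] is O(min (y, 1/y)); hence
   |g_(n,N)(x)| <= C n^(-2N-1) min (n x, 1/(n x)), which implies the claimed bound. *)

From Stdlib Require Import Reals Lra Lia.
From Coquelicot Require Import Coquelicot.
Open Scope R_scope.

Lemma is_derive_eq (f : R -> R) (x l l' : R) : is_derive f x l -> l = l' -> is_derive f x l'.
Proof. now intros H <-. Qed.

Lemma locally_pos x : 0 < x -> locally x (fun z => 0 < z).
Proof.
  intros Hx. exists (mkposreal x Hx). intros z Hz.
  apply Rabs_lt_between' in Hz. simpl in Hz. lra.
Qed.

Lemma continuity_2d_pt_comp_continuity (f : R -> R) (g : R -> R -> R) x y :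
  continuity f -> continuity_2d_pt g x y -> continuity_2d_pt (fun u v => f (g u v)) x y.
Proof. intros Hf Hg. apply continuity_1d_2d_pt_comp; [apply Hf | exact Hg]. Qed.

Lemma RInt_scal_R (c : R) (f : R -> R) a b : ex_RInt f a b ->
  RInt (fun t => c * f t) a b = c * RInt f a b.
Proof. exact (RInt_scal (V := R_CompleteNormedModule) f a b c). Qed.

Lemma cos_2n_PI n : cos (2 * INR n * PI) = 1.
Proof. rewrite <- (Rplus_0_l (2 * INR n * PI)), cos_period. apply cos_0. Qed.

Lemma sin_2n_PI n : sin (2 * INR n * PI) = 0.
Proof. rewrite <- (Rplus_0_l (2 * INR n * PI)), sin_period. apply sin_0. Qed.

Lemma exp_le_compat x y : x <= y -> exp x <= exp y.
Proof. intros [H | ->]; [left; now apply exp_increasing | apply Rle_refl]. Qed.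

Lemma exp_mult_INR k x : exp (INR k * x) = exp x ^ k.
Proof.
  induction k as [|k IH]; [simpl; rewrite Rmult_0_l; apply exp_0|].
  rewrite S_INR, Rmult_plus_distr_r, Rmult_1_l, exp_plus, IH. simpl. ring.
Qed.

Lemma pow_le_exp k t : 0 <= t -> t ^ k <= INR k ^ k * exp t.
Proof.
  intros Ht. destruct k as [|k]; [simpl; pose proof (exp_ineq1_le t); lra|].
  assert (Hk : 0 < INR (S k)) by (apply lt_0_INR; lia).
  (* raise t / k <= exp (t / k) to the k-th power *)
  replace t with (INR (S k) * (t / INR (S k))) at 1 2 by (field; lra).
  rewrite Rpow_mult_distr, exp_mult_INR.
  apply Rmult_le_compat_l; [apply pow_le; lra|].
  apply pow_incr. split; [apply Rdiv_le_0_compat; lra|].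
  pose proof (exp_ineq1_le (t / INR (S k))). lra.
Qed.

Lemma pow_mul_exp_le m a : (1 <= m)%nat -> 0 <= a ->
  a ^ m * exp (-2 * a) <= INR (m - 1) ^ (m - 1) * (a * exp (- a)).
Proof.
  intros Hm Ha. replace m with (S (m - 1)) at 1 by lia. simpl pow.
  assert (Hpow := pow_le_exp (m - 1) a Ha).
  assert (Hinv : exp a * exp (- a) = 1) by (rewrite <- exp_plus, Rplus_opp_r; apply exp_0).
  assert (Hexp := exp_pos (- a)).
  replace (-2 * a) with (- a + - a) by ring. rewrite exp_plus.
  assert (Hbound : a ^ (m - 1) * exp (- a) <= INR (m - 1) ^ (m - 1)).
  { rewrite <- (Rmult_1_r (INR _ ^ _)), <- Hinv, <- Rmult_assoc.
    apply Rmult_le_compat_r; lra. }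
  replace (a * a ^ (m - 1) * (exp (- a) * exp (- a)))
    with ((a * exp (- a)) * (a ^ (m - 1) * exp (- a))) by ring.
  rewrite (Rmult_comm (INR _ ^ _)). apply Rmult_le_compat_l; [nra | exact Hbound].
Qed.

Lemma mul_exp_neg_le a : 0 <= a -> a * exp (- a) <= a.
Proof.
  intros Ha. assert (exp (- a) <= 1) by (rewrite <- exp_0; apply exp_le_compat; lra).
  nra.
Qed.

Lemma mul_exp_neg_le_exp_half a : 0 <= a -> a * exp (- a) <= 2 * exp (- (a / 2)).
Proof.
  intros Ha. pose proof (exp_ineq1_le (a / 2)).
  assert (Hinv : exp (- (a / 2)) * exp (a / 2) = 1)
    by (rewrite <- exp_plus, Rplus_opp_l; apply exp_0).
  pose proof (exp_pos (- (a / 2))).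
  replace (- a) with (- (a / 2) + - (a / 2)) by field. rewrite exp_plus.
  nra.
Qed.

Lemma sin_lb_eq a : sin_lb a = a - a ^ 3 / 6 + a ^ 5 / 120 - a ^ 7 / 5040.
Proof.
  unfold sin_lb, sin_approx. simpl sum_f_R0. unfold sin_term.
  change (Factorial.fact (2 * 0 + 1)) with 1%nat.
  change (Factorial.fact (2 * 1 + 1)) with 6%nat.
  change (Factorial.fact (2 * 2 + 1)) with 120%nat.
  change (Factorial.fact (2 * 3 + 1)) with 5040%nat.
  rewrite !INR_IZR_INZ. simpl Z.of_nat. simpl. field.
Qed.

Lemma sin_ge_third t : 0 <= t <= PI / 2 -> t / 3 <= sin t.
Proof.
  intros [H0 H1]. assert (P4 := PI_4).
  destruct (SIN t) as [S _]; try lra.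
  rewrite sin_lb_eq in S.
  assert (t ^ 2 <= 4) by nra.
  assert (0 <= t ^ 4) by (apply pow_le; lra).
  assert (t ^ 4 * (1 / 120 - t ^ 2 / 5040) >= 0) by nra.
  nra.
Qed.

Lemma Rmin_inv_mul_le_Rpower y x d : 0 < x <= y -> 0 <= d <= 1 ->
  Rmin y (/ y) * (1 + x) <= 2 * Rpower y d.
Proof.
  intros [Hx Hxy] Hd. unfold Rpower.
  assert (Hy : 0 < y) by lra. assert (Hinv : 0 < / y) by (apply Rinv_0_lt_compat, Hy).
  destruct (Rle_dec y 1) as [Hy1 | Hy1].
  - assert (ln y <= 0) by (rewrite <- ln_1; apply ln_le; lra).
    assert (y <= exp (d * ln y))
      by (rewrite <- (exp_ln y) at 1 by lra; apply exp_le_compat; nra).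
    pose proof (Rmin_l y (/ y)). pose proof (Rmin_pos y (/ y) Hy Hinv).
    nra.
  - assert (0 <= ln y) by (rewrite <- ln_1; apply ln_le; lra).
    assert (1 <= exp (d * ln y)) by (rewrite <- exp_0; apply exp_le_compat; nra).
    pose proof (Rmin_r y (/ y)). pose proof (Rmin_pos y (/ y) Hy Hinv).
    assert (/ y * (1 + x) <= 2).
    { apply (Rmult_le_reg_l y); [lra|]. rewrite <- Rmult_assoc, Rinv_r by lra. lra. }
    nra.
Qed.

Lemma sum_expansion_remainder (a p : nat -> R) (c : R) :
  (forall j, a j = p j + c * a (S j)) ->
  forall M, a O - sum_f_R0 (fun k => c ^ k * p k) M = c ^ S M * a (S M).
Proof.
  intros E M. induction M as [|M IH].
  - rewrite (E O). simpl. ring.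
  - rewrite tech5. rewrite (E (S M)) in IH. simpl in *. lra.
Qed.

(** * Euler derivatives *)

Definition is_theta_derive (f tf : R -> R) : Prop :=
  forall x, 0 < x -> is_derive f x (tf x / x).

Definition theta_smooth (f : R -> R) : Prop :=
  exists f1 f2, is_theta_derive f f1 /\ is_theta_derive f1 f2.

Lemma is_theta_derive_ext f g tf : (forall x, 0 < x -> f x = g x) ->
  is_theta_derive g tf -> is_theta_derive f tf.
Proof.
  intros E Hg x Hx. apply (is_derive_ext_loc g); [|now apply Hg].
  apply filter_imp with (2 := locally_pos x Hx). intros z Hz. symmetry. now apply E.
Qed.

Lemma is_theta_derive_eq f tf tg : is_theta_derive f tf ->
  (forall x, 0 < x -> tf x = tg x) -> is_theta_derive f tg.
Proof. intros Hf E x Hx. rewrite <- E by exact Hx. now apply Hf. Qed.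

Lemma is_theta_derive_const c : is_theta_derive (fun _ => c) (fun _ => 0).
Proof. intros x Hx. auto_derive; [auto | field; lra]. Qed.

Lemma is_theta_derive_id : is_theta_derive (fun x => x) (fun x => x).
Proof. intros x Hx. auto_derive; [auto | field; lra]. Qed.

Lemma is_theta_derive_plus f g tf tg : is_theta_derive f tf -> is_theta_derive g tg ->
  is_theta_derive (fun x => f x + g x) (fun x => tf x + tg x).
Proof.
  intros Hf Hg x Hx. apply (is_derive_eq _ _ (tf x / x + tg x / x)).
  - exact (is_derive_plus f g x _ _ (Hf x Hx) (Hg x Hx)).
  - field; lra.
Qed.

Lemma is_theta_derive_scal c f tf : is_theta_derive f tf ->
  is_theta_derive (fun x => c * f x) (fun x => c * tf x).
Proof.
  intros Hf x Hx. apply (is_derive_eq _ _ (c * (tf x / x))).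
  - exact (is_derive_scal f x c _ (Hf x Hx)).
  - field; lra.
Qed.

Lemma is_theta_derive_mult f g tf tg : is_theta_derive f tf -> is_theta_derive g tg ->
  is_theta_derive (fun x => f x * g x) (fun x => tf x * g x + f x * tg x).
Proof.
  intros Hf Hg x Hx. apply (is_derive_eq _ _ (tf x / x * g x + f x * (tg x / x))).
  - exact (Derive.is_derive_mult f g x _ _ (Hf x Hx) (Hg x Hx)).
  - field; lra.
Qed.

(** * The moments J_m and their ODE *)

Definition moment_integrand (n m : nat) (y t : R) : R :=
  sin t ^ m * exp (-2 * y * sin t) * cos (2 * INR n * t).

Definition moment (n m : nat) (y : R) : R := RInt (moment_integrand n m y) 0 PI.

Definition scaled_moment (n m : nat) (x : R) : R :=
  INR n * ((INR n * x) ^ m * moment n m (INR n * x)).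

Lemma moment_integrand_continuous n m y t : continuous (moment_integrand n m y) t.
Proof.
  apply (ex_derive_continuous (K := R_AbsRing) (V := R_NormedModule)).
  unfold moment_integrand. auto_derive. auto.
Qed.

Lemma is_RInt_moment n m y : is_RInt (moment_integrand n m y) 0 PI (moment n m y).
Proof.
  apply (RInt_correct (V := R_CompleteNormedModule)).
  apply (ex_RInt_continuous (V := R_CompleteNormedModule)).
  intros; apply moment_integrand_continuous.
Qed.

Lemma moment_integrand_continuity_2d n m y t : continuity_2d_pt (moment_integrand n m) y t.
Proof.
  unfold moment_integrand.
  repeat apply continuity_2d_pt_mult.
  - apply (continuity_2d_pt_comp_continuity (fun z => z ^ m));
      [apply derivable_continuous, derivable_pow|].
    apply (continuity_2d_pt_comp_continuity sin);
      [exact continuity_sin | apply continuity_2d_pt_id2].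
  - apply (continuity_2d_pt_comp_continuity exp);
      [exact (derivable_continuous _ derivable_exp)|].
    repeat apply continuity_2d_pt_mult.
    + apply continuity_2d_pt_const.
    + apply continuity_2d_pt_id1.
    + apply (continuity_2d_pt_comp_continuity sin);
        [exact continuity_sin | apply continuity_2d_pt_id2].
  - apply (continuity_2d_pt_comp_continuity cos); [exact continuity_cos|].
    apply continuity_2d_pt_mult; [apply continuity_2d_pt_const | apply continuity_2d_pt_id2].
Qed.

Lemma moment_integrand_derive n m y t :
  is_derive (fun z => moment_integrand n m z t) y (-2 * moment_integrand n (S m) y t).
Proof. unfold moment_integrand. auto_derive; auto. simpl. ring. Qed.

Lemma moment_derive n m y : is_derive (moment n m) y (-2 * moment n (S m) y).
Proof.
  assert (E : RInt (fun t => Derive (fun z => moment_integrand n m z t) y) 0 PI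
              = -2 * moment n (S m) y).
  { apply is_RInt_unique.
    apply (is_RInt_ext (fun t => scal (-2) (moment_integrand n (S m) y t))).
    - intros t _. symmetry. apply is_derive_unique, moment_integrand_derive.
    - apply (is_RInt_scal (V := R_NormedModule)), is_RInt_moment. }
  rewrite <- E. apply is_derive_RInt_param.
  - apply filter_forall. intros z t _. eexists. apply moment_integrand_derive.
  - intros t _.
    apply continuity_2d_pt_ext with (f := fun u v => -2 * moment_integrand n (S m) u v).
    + intros u v. symmetry. apply is_derive_unique, moment_integrand_derive.
    + apply continuity_2d_pt_mult;
        [apply continuity_2d_pt_const | apply moment_integrand_continuity_2d].
  - apply filter_forall. intros z. eexists. apply is_RInt_moment.
Qed.

Lemma scaled_moment_theta n m : is_theta_derive (scaled_moment n m)
  (fun x => INR m * scaled_moment n m x - 2 * scaled_moment n (S m) x).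
Proof.
  intros x Hx. unfold scaled_moment. auto_derive.
  { eexists. apply moment_derive. }
  rewrite (is_derive_unique _ _ _ (moment_derive n m _)).
  destruct m; [simpl | rewrite S_INR; simpl]; field; lra.
Qed.

Lemma is_RInt_exp_sin_sin_2n n y :
  is_RInt (fun t => exp (-2 * y * sin t) * sin (2 * INR n * t)) 0 PI 0.
Proof.
  set (h := fun t => exp (-2 * y * sin t) * sin (2 * INR n * t)).
  assert (Hh : ex_RInt h 0 PI).
  { apply (ex_RInt_continuous (V := R_CompleteNormedModule)). intros t _.
    apply (ex_derive_continuous (K := R_AbsRing) (V := R_NormedModule)).
    unfold h. auto_derive. auto. }
  replace 0 with (RInt h 0 PI) at 2; [apply (RInt_correct (V := R_CompleteNormedModule)), Hh|].
  (* the substitution t -> PI - t turns h into -h *)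
  assert (E := RInt_comp_lin (V := R_CompleteNormedModule) h (-1) PI 0 PI).
  replace (-1 * 0 + PI) with PI in E by ring.
  replace (-1 * PI + PI) with 0 in E by ring.
  specialize (E (ex_RInt_swap _ _ _ Hh)).
  rewrite <- (opp_RInt_swap (V := R_CompleteNormedModule) h 0 PI Hh) in E.
  rewrite (RInt_ext _ h) in E.
  - cbv [opp] in E; simpl in E. lra.
  - intros t _. unfold h. cbv [scal mult opp]; simpl. cbv [mult]; simpl.
    replace (-1 * t + PI) with (PI - t) by ring.
    replace (2 * INR n * (PI - t)) with (2 * INR n * PI - 2 * INR n * t) by ring.
    rewrite sin_PI_x, sin_minus, sin_2n_PI, cos_2n_PI. ring.
Qed.

Lemma phi_eq_moment n y : phi n y = RtoC (moment n 0 y).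
Proof.
  unfold phi. apply (is_RInt_unique (V := C_R_CompleteNormedModule)).
  apply (is_RInt_fct_extend_pair (U := R_NormedModule) (V := R_NormedModule)); simpl.
  - apply (is_RInt_ext (moment_integrand n 0 y)); [|apply is_RInt_moment].
    intros t _. unfold moment_integrand, expi, RtoC; simpl. ring.
  - apply (is_RInt_ext (fun t => exp (-2 * y * sin t) * sin (2 * INR n * t)));
      [|apply is_RInt_exp_sin_sin_2n].
    intros t _. unfold expi, RtoC; simpl. ring.
Qed.

Definition moment_ode_primitive (n : nat) (y t : R) : R :=
  -2 * y * cos t * exp (-2 * y * sin t) * cos (2 * INR n * t)
  + 2 * INR n * exp (-2 * y * sin t) * sin (2 * INR n * t).

Lemma moment_ode_primitive_derive n y t :
  is_derive (moment_ode_primitive n y) t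
    (4 * INR n ^ 2 * moment_integrand n 0 y t
     + 4 * y ^ 2 * (moment_integrand n 0 y t - moment_integrand n 2 y t)
     + 2 * y * moment_integrand n 1 y t).
Proof.
  unfold moment_ode_primitive, moment_integrand. auto_derive; auto.
  assert (E : sin t ^ 2 = 1 - cos t ^ 2) by (rewrite <- (sin2_cos2 t); unfold Rsqr; ring).
  rewrite E. ring.
Qed.

Lemma moment_ode n y :
  4 * INR n ^ 2 * moment n 0 y + 4 * y ^ 2 * (moment n 0 y - moment n 2 y)
  + 2 * y * moment n 1 y = 4 * y.
Proof.
  set (comb := fun t => 4 * INR n ^ 2 * moment_integrand n 0 y t
     + 4 * y ^ 2 * (moment_integrand n 0 y t - moment_integrand n 2 y t)
     + 2 * y * moment_integrand n 1 y t).
  assert (Hmoments : is_RInt comb 0 PI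
     (4 * INR n ^ 2 * moment n 0 y + 4 * y ^ 2 * (moment n 0 y - moment n 2 y)
      + 2 * y * moment n 1 y)).
  { exact (is_RInt_plus (V := R_NormedModule) _ _ 0 PI _ _
      (is_RInt_plus _ _ 0 PI _ _
        (is_RInt_scal _ 0 PI _ _ (is_RInt_moment n 0 y))
        (is_RInt_scal _ 0 PI _ _
          (is_RInt_minus _ _ 0 PI _ _ (is_RInt_moment n 0 y) (is_RInt_moment n 2 y))))
      (is_RInt_scal _ 0 PI _ _ (is_RInt_moment n 1 y))). }
  assert (Hprimitive : is_RInt comb 0 PI (4 * y)).
  { replace (4 * y) with (minus (moment_ode_primitive n y PI) (moment_ode_primitive n y 0)).
    - apply (is_RInt_derive (V := R_CompleteNormedModule)).
      + intros t _. apply moment_ode_primitive_derive.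
      + intros t _. apply (ex_derive_continuous (K := R_AbsRing) (V := R_NormedModule)).
        unfold comb, moment_integrand. auto_derive. auto.
    - unfold moment_ode_primitive.
      rewrite cos_2n_PI, sin_2n_PI, cos_PI, sin_PI, !Rmult_0_r, cos_0, sin_0, !Rmult_0_r,
        exp_0.
      cbv [minus plus opp]; simpl. ring. }
  rewrite <- (is_RInt_unique _ _ _ _ Hmoments). exact (is_RInt_unique _ _ _ _ Hprimitive).
Qed.

(** * Polynomials in 1/(1+x^2) and combinations of moments *)

Definition lorentzian (x : R) : R := / (1 + x ^ 2).

Lemma one_plus_sqr_pos x : 0 < 1 + x ^ 2.
Proof. nra. Qed.

Lemma lorentzian_theta : is_theta_derive lorentzian
  (fun x => -2 * lorentzian x + 2 * (lorentzian x * lorentzian x)).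
Proof.
  intros x Hx. pose proof (one_plus_sqr_pos x). unfold lorentzian.
  auto_derive; [lra | field; lra].
Qed.

Lemma lorentzian_bound x : Rabs (lorentzian x) <= 1.
Proof.
  pose proof (one_plus_sqr_pos x). unfold lorentzian.
  rewrite Rabs_pos_eq by (left; apply Rinv_0_lt_compat; lra).
  rewrite <- Rinv_1. apply Rinv_le_contravar; nra.
Qed.

Inductive lorentz_poly : (R -> R) -> Prop :=
| lorentz_poly_const c : lorentz_poly (fun _ => c)
| lorentz_poly_lorentzian : lorentz_poly lorentzian
| lorentz_poly_plus f g :
    lorentz_poly f -> lorentz_poly g -> lorentz_poly (fun x => f x + g x)
| lorentz_poly_mult f g :
    lorentz_poly f -> lorentz_poly g -> lorentz_poly (fun x => f x * g x).

Lemma lorentz_poly_theta f : lorentz_poly f ->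
  exists tf, lorentz_poly tf /\ is_theta_derive f tf.
Proof.
  induction 1 as [c | | f g _ [tf [Hf Df]] _ [tg [Hg Dg]]
                  | f g Pf [tf [Hf Df]] Pg [tg [Hg Dg]]].
  - exists (fun _ => 0). split; [constructor | apply is_theta_derive_const].
  - eexists. split; [|apply lorentzian_theta].
    repeat constructor.
  - eexists. split; [|apply is_theta_derive_plus; eassumption]. now constructor.
  - eexists. split; [|apply is_theta_derive_mult; eassumption].
    constructor; now constructor.
Qed.

Lemma lorentz_poly_bounded f : lorentz_poly f -> exists B, forall x, Rabs (f x) <= B.
Proof.
  induction 1 as [c | | f g _ [B1 H1] _ [B2 H2] | f g _ [B1 H1] _ [B2 H2]].
  - exists (Rabs c). intros; lra.
  - exists 1. apply lorentzian_bound.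
  - exists (B1 + B2). intros x.
    eapply Rle_trans; [apply Rabs_triang | specialize (H1 x); specialize (H2 x); lra].
  - exists (B1 * B2). intros x. rewrite Rabs_mult.
    apply Rmult_le_compat; auto using Rabs_pos.
Qed.

Inductive moment_comb : (nat -> R -> R) -> Prop :=
| moment_comb_scaled m : (1 <= m)%nat -> moment_comb (fun n => scaled_moment n m)
| moment_comb_plus w1 w2 :
    moment_comb w1 -> moment_comb w2 -> moment_comb (fun n x => w1 n x + w2 n x)
| moment_comb_mult r w :
    lorentz_poly r -> moment_comb w -> moment_comb (fun n x => r x * w n x).

Lemma moment_comb_theta w : moment_comb w ->
  exists tw, moment_comb tw /\ forall n, is_theta_derive (w n) (tw n).
Proof.
  induction 1 as [m Hm | w1 w2 _ [tw1 [H1 D1]] _ [tw2 [H2 D2]]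
                  | r w Hr Hw [tw [Htw Dw]]].
  - exists (fun n x => INR m * scaled_moment n m x + -2 * scaled_moment n (S m) x).
    split.
    + apply moment_comb_plus; apply moment_comb_mult; try apply lorentz_poly_const.
      * now apply moment_comb_scaled.
      * apply moment_comb_scaled. lia.
    + intros n. apply (is_theta_derive_eq _ _ _ (scaled_moment_theta n m)).
      intros x _. cbv beta. ring.
  - exists (fun n x => tw1 n x + tw2 n x). split.
    + now apply moment_comb_plus.
    + intros n. now apply is_theta_derive_plus.
  - destruct (lorentz_poly_theta r Hr) as [tr [Htr Dr]].
    exists (fun n x => tr x * w n x + r x * tw n x). split.
    + now apply moment_comb_plus; apply moment_comb_mult.
    + intros n. now apply is_theta_derive_mult.
Qed.

Lemma moment_comb_theta_smooth w n : moment_comb w -> theta_smooth (w n).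
Proof.
  intros Hw. destruct (moment_comb_theta w Hw) as [tw [Htw Dw]].
  destruct (moment_comb_theta tw Htw) as [ttw [_ Dtw]].
  now exists (tw n), (ttw n).
Qed.

(** * The operator of the recursion for Psi *)

Definition Lpsi (f : R -> R) (x : R) : R :=
  x ^ 2 / (4 * (1 + x ^ 2)) * (Derive_n f 2 x + / x * Derive f x).

(* x^2 (f'' + f'/x) = theta (theta f) *)
Lemma Lpsi_theta2 f f1 f2 : is_theta_derive f f1 -> is_theta_derive f1 f2 ->
  forall x, 0 < x -> Lpsi f x = lorentzian x * f2 x / 4.
Proof.
  intros H1 H2 x Hx. unfold Lpsi. change (Derive_n f 2 x) with (Derive (Derive f) x).
  assert (D : is_derive (Derive f) x (f2 x / x * / x + f1 x * (- / x ^ 2))).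
  { apply (is_derive_ext_loc (fun z => f1 z * / z)).
    - apply filter_imp with (2 := locally_pos x Hx). intros z Hz.
      symmetry. now apply is_derive_unique, H1.
    - apply (Derive.is_derive_mult f1 (fun z => / z)); [now apply H2|].
      auto_derive; [lra | field; lra]. }
  rewrite (is_derive_unique _ _ _ D), (is_derive_unique f x _ (H1 x Hx)).
  unfold lorentzian. pose proof (one_plus_sqr_pos x). field. lra.
Qed.

Lemma Lpsi_ext f h : (forall z, 0 < z -> f z = h z) ->
  forall x, 0 < x -> Lpsi f x = Lpsi h x.
Proof.
  intros E x Hx. unfold Lpsi.
  rewrite (Derive_n_ext_loc f h 2 x), (Derive_ext_loc f h x); [reflexivity | ..];
    apply filter_imp with (2 := locally_pos x Hx); exact E.
Qed.

Lemma Lpsi_plus_scal f h c : theta_smooth f -> theta_smooth h ->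
  forall x, 0 < x -> Lpsi (fun z => f z + c * h z) x = Lpsi f x + c * Lpsi h x.
Proof.
  intros [f1 [f2 [Hf1 Hf2]]] [h1 [h2 [Hh1 Hh2]]] x Hx.
  rewrite (Lpsi_theta2 f f1 f2), (Lpsi_theta2 h h1 h2),
    (Lpsi_theta2 _ (fun z => f1 z + c * h1 z) (fun z => f2 z + c * h2 z));
    auto using is_theta_derive_plus, is_theta_derive_scal.
  field.
Qed.

Lemma Lpsi_moment_comb f w : moment_comb w -> (forall n, is_theta_derive (f n) (w n)) ->
  exists w2, moment_comb w2 /\ forall n x, 0 < x -> Lpsi (f n) x = w2 n x.
Proof.
  intros Hw Df. destruct (moment_comb_theta w Hw) as [tw [Htw Dw]].
  exists (fun n x => (lorentzian x * / 4) * tw n x). split.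
  - apply moment_comb_mult; [|exact Htw].
    apply lorentz_poly_mult; constructor.
  - intros n x Hx. rewrite (Lpsi_theta2 (f n) (w n) (tw n)); auto. field.
Qed.

Lemma id_mult_lorentz_poly_theta r : lorentz_poly r ->
  exists r1, lorentz_poly r1 /\ is_theta_derive (fun x => x * r x) (fun x => x * r1 x).
Proof.
  intros Hr. destruct (lorentz_poly_theta r Hr) as [tr [Htr Dr]].
  exists (fun x => r x + tr x). split; [now constructor|].
  apply (is_theta_derive_eq _ _ _
    (is_theta_derive_mult _ _ _ _ is_theta_derive_id Dr)).
  intros x _. ring.
Qed.

Lemma Psi_eq_id_mult k :
  exists r, lorentz_poly r /\ forall x, 0 < x -> Psi k x = x * r x.
Proof.
  induction k as [|k [r [Hr E]]].
  - exists lorentzian. split; [constructor|].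
    intros x _. unfold lorentzian. simpl. reflexivity.
  - destruct (id_mult_lorentz_poly_theta r Hr) as [r1 [Hr1 D1]].
    destruct (id_mult_lorentz_poly_theta r1 Hr1) as [r2 [Hr2 D2]].
    exists (fun x => lorentzian x * (r2 x * / 4)). split.
    + repeat constructor; assumption.
    + intros x Hx. change (Psi (S k) x) with (Lpsi (Psi k) x).
      rewrite (Lpsi_ext _ (fun z => z * r z)), (Lpsi_theta2 _ _ _ D1 D2); auto.
      field.
Qed.

Lemma Psi_theta_smooth k : theta_smooth (Psi k).
Proof.
  destruct (Psi_eq_id_mult k) as [r [Hr E]].
  destruct (id_mult_lorentz_poly_theta r Hr) as [r1 [Hr1 D1]].
  destruct (id_mult_lorentz_poly_theta r1 Hr1) as [r2 [_ D2]].
  exists (fun x => x * r1 x), (fun x => x * r2 x).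
  split; [|exact D2]. now apply (is_theta_derive_ext _ _ _ E).
Qed.

Definition iter_Lpsi_phi (n j : nat) : R -> R := Nat.iter j Lpsi (scaled_moment n 0).

Lemma iter_Lpsi_phi_moment_comb j :
  exists w, moment_comb w /\ forall n x, 0 < x -> iter_Lpsi_phi n (S j) x = w n x.
Proof.
  induction j as [|j [w [Hw E]]].
  - apply (Lpsi_moment_comb (fun n => scaled_moment n 0)
             (fun n x => -2 * scaled_moment n 1 x)).
    + apply (moment_comb_mult (fun _ => -2)); constructor. lia.
    + intros n. apply (is_theta_derive_eq _ _ _ (scaled_moment_theta n 0)).
      intros x _. simpl. ring.
  - destruct (moment_comb_theta w Hw) as [tw [Htw Dw]].
    destruct (Lpsi_moment_comb w tw Htw Dw) as [w2 [Hw2 E2]].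
    exists w2. split; [exact Hw2|]. intros n x Hx.
    change (iter_Lpsi_phi n (S (S j)) x) with (Lpsi (iter_Lpsi_phi n (S j)) x).
    rewrite (Lpsi_ext _ (w n)); auto.
Qed.

Lemma iter_Lpsi_phi_theta_smooth n j : theta_smooth (iter_Lpsi_phi n (S j)).
Proof.
  destruct (iter_Lpsi_phi_moment_comb j) as [w [Hw E]].
  destruct (moment_comb_theta_smooth w n Hw) as [f1 [f2 [D1 D2]]].
  exists f1, f2. split; [|exact D2]. now apply (is_theta_derive_ext _ _ _ (E n)).
Qed.

Lemma scaled_moment_0_expansion n x : (1 <= n)%nat -> 0 < x ->
  scaled_moment n 0 x = Psi 0 x + / INR n ^ 2 * iter_Lpsi_phi n 1 x.
Proof.
  intros Hn Hx.
  assert (Hn1 : 1 <= INR n) by (apply (le_INR 1); exact Hn).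
  assert (D1 : is_theta_derive (scaled_moment n 0) (fun z => -2 * scaled_moment n 1 z)).
  { apply (is_theta_derive_eq _ _ _ (scaled_moment_theta n 0)). intros z _. simpl. ring. }
  assert (D2 : is_theta_derive (fun z => -2 * scaled_moment n 1 z)
                 (fun z => -2 * (scaled_moment n 1 z - 2 * scaled_moment n 2 z))).
  { apply (is_theta_derive_eq _ _ _
      (is_theta_derive_scal (-2) _ _ (scaled_moment_theta n 1))).
    intros z _. simpl. ring. }
  change (iter_Lpsi_phi n 1 x) with (Lpsi (scaled_moment n 0) x).
  rewrite (Lpsi_theta2 _ _ _ D1 D2 x Hx).
  pose proof (moment_ode n (INR n * x)) as Hode.
  unfold scaled_moment, lorentzian, Psi. pose proof (one_plus_sqr_pos x).
  apply Rminus_diag_uniq.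
  match type of Hode with ?L = ?R =>
    transitivity (/ (4 * INR n * (1 + x ^ 2)) * (L - R)) end.
  - field. split; lra.
  - rewrite Hode. ring.
Qed.

Lemma iter_Lpsi_phi_expansion n j x : (1 <= n)%nat -> 0 < x ->
  iter_Lpsi_phi n j x = Psi j x + / INR n ^ 2 * iter_Lpsi_phi n (S j) x.
Proof.
  intros Hn. revert x.
  induction j as [|j IH]; intros x Hx; [now apply scaled_moment_0_expansion|].
  change (iter_Lpsi_phi n (S j) x) with (Lpsi (iter_Lpsi_phi n j) x).
  rewrite (Lpsi_ext _ _ IH x Hx).
  apply Lpsi_plus_scal; auto using Psi_theta_smooth, iter_Lpsi_phi_theta_smooth.
Qed.

Lemma g_eq_remainder n N x : (1 <= n)%nat -> 0 < x ->
  g n N x = RtoC (/ INR n ^ (2 * S N) * iter_Lpsi_phi n (S N) x).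
Proof.
  intros Hn Hx. unfold g, varphi.
  rewrite phi_eq_moment, <- RtoC_mult, <- RtoC_minus. f_equal.
  assert (Hexp := sum_expansion_remainder (fun j => iter_Lpsi_phi n j x) (fun j => Psi j x)
    (/ INR n ^ 2) (fun j => iter_Lpsi_phi_expansion n j x Hn Hx) N).
  rewrite pow_inv, <- pow_mult in Hexp. rewrite <- Hexp. f_equal.
  - unfold iter_Lpsi_phi, scaled_moment. simpl. ring.
  - apply sum_eq. intros k _. now rewrite pow_inv, <- pow_mult.
Qed.

Lemma exp_neg_sin_le y t : 0 <= y -> 0 <= t <= PI ->
  exp (- (y * sin t / 2)) <= exp (- (y * t / 6)) + exp (- (y * (PI - t) / 6)).
Proof.
  intros Hy Ht.
  pose proof (exp_pos (- (y * t / 6))). pose proof (exp_pos (- (y * (PI - t) / 6))).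
  destruct (Rle_dec t (PI / 2)).
  - assert (t / 3 <= sin t) by (apply sin_ge_third; lra).
    assert (exp (- (y * sin t / 2)) <= exp (- (y * t / 6))) by (apply exp_le_compat; nra).
    lra.
  - assert ((PI - t) / 3 <= sin (PI - t)) by (apply sin_ge_third; lra).
    rewrite sin_PI_x in H1.
    assert (exp (- (y * sin t / 2)) <= exp (- (y * (PI - t) / 6)))
      by (apply exp_le_compat; nra).
    lra.
Qed.

Lemma is_RInt_exp_neg_sym y : 0 < y ->
  is_RInt (fun t => exp (- (y * t / 6)) + exp (- (y * (PI - t) / 6))) 0 PI
    (12 / y * (1 - exp (- (y * PI / 6)))).
Proof.
  intros Hy.
  set (F := fun t => 6 / y * (exp (- (y * (PI - t) / 6)) - exp (- (y * t / 6)))).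
  replace (12 / y * (1 - exp (- (y * PI / 6)))) with (minus (F PI) (F 0)).
  - apply (is_RInt_derive (V := R_CompleteNormedModule)).
    + intros t _. unfold F. auto_derive; [auto|].
      replace (- (y * (PI + - t) * / 6)) with (- (y * (PI - t) / 6)) by field.
      replace (- (y * t * / 6)) with (- (y * t / 6)) by field.
      field. lra.
    + intros t _. apply (ex_derive_continuous (K := R_AbsRing) (V := R_NormedModule)).
      auto_derive. auto.
  - unfold F, minus, plus, opp; simpl.
    rewrite Rminus_diag, Rminus_0_r, !Rmult_0_r, Rdiv_0_l, Ropp_0, exp_0.
    field. lra.
Qed.

Lemma RInt_sin_mul_exp_le y : 0 < y ->
  RInt (fun t => y * sin t * exp (- (y * sin t))) 0 PI <= 24 * Rmin y (/ y).
Proof.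
  intros Hy. assert (P4 := PI_4). assert (P0 := PI_RGT_0).
  set (f := fun t => y * sin t * exp (- (y * sin t))).
  assert (Hf : ex_RInt f 0 PI).
  { apply (ex_RInt_continuous (V := R_CompleteNormedModule)). intros t _.
    apply (ex_derive_continuous (K := R_AbsRing) (V := R_NormedModule)).
    unfold f. auto_derive. auto. }
  assert (Hsin : forall t, 0 < t < PI -> 0 <= y * sin t <= y).
  { intros t Ht. pose proof (sin_ge_0 t). pose proof (SIN_bound t). nra. }
  assert (Hsmall : RInt f 0 PI <= PI * y).
  { apply Rle_trans with (RInt (fun _ => y) 0 PI).
    - apply RInt_le; [lra | exact Hf | apply ex_RInt_const |].
      intros t Ht. specialize (Hsin t Ht). unfold f.
      eapply Rle_trans; [apply mul_exp_neg_le | ]; lra.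
    - rewrite RInt_const. unfold scal; simpl; unfold mult; simpl. lra. }
  assert (Hlarge : RInt f 0 PI <= 24 / y).
  { assert (Hexp := is_RInt_scal _ _ _ 2 _ (is_RInt_exp_neg_sym y Hy)).
    eapply Rle_trans.
    - apply RInt_le; [lra | exact Hf | eexists; exact Hexp |].
      intros t Ht. specialize (Hsin t Ht). unfold f, scal; simpl; unfold mult; simpl.
      eapply Rle_trans; [apply mul_exp_neg_le_exp_half; lra|].
      pose proof (exp_neg_sin_le y t). lra.
    - cbv beta. rewrite (is_RInt_unique _ _ _ _ Hexp).
      unfold scal; simpl; unfold mult; simpl.
      pose proof (exp_pos (- (y * PI / 6))).
      apply (Rmult_le_reg_r y); [exact Hy|]. field_simplify; lra. }
  unfold Rmin. destruct (Rle_dec y (/ y)); [nra | unfold Rdiv in Hlarge; lra].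
Qed.

Lemma moment_integrand_weighted_le n m y t : (1 <= m)%nat -> 0 < y -> 0 <= t <= PI ->
  y ^ m * Rabs (moment_integrand n m y t)
  <= INR (m - 1) ^ (m - 1) * (y * sin t * exp (- (y * sin t))).
Proof.
  intros Hm Hy Ht. assert (Hs : 0 <= sin t) by (apply sin_ge_0; lra).
  unfold moment_integrand.
  rewrite !Rabs_mult, <- RPow_abs, (Rabs_pos_eq (sin t)), (Rabs_pos_eq (exp _)) by
    (auto; left; apply exp_pos).
  assert (Hc : Rabs (cos (2 * INR n * t)) <= 1) by (apply Rabs_le, COS_bound).
  assert (Hkey := pow_mul_exp_le m (y * sin t) Hm ltac:(nra)).
  rewrite Rpow_mult_distr in Hkey.
  replace (-2 * (y * sin t)) with (-2 * y * sin t) in Hkey by ring.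
  assert (0 <= y ^ m * (sin t ^ m * exp (-2 * y * sin t))).
  { apply Rmult_le_pos; [apply pow_le; lra|].
    apply Rmult_le_pos; [apply pow_le; lra | left; apply exp_pos]. }
  rewrite <- Rmult_assoc in Hkey |- *.
  nra.
Qed.

Lemma weighted_moment_bound m : (1 <= m)%nat ->
  exists C, 0 <= C /\ forall n y, 0 < y -> Rabs (y ^ m * moment n m y) <= C * Rmin y (/ y).
Proof.
  intros Hm. set (Cm := INR (m - 1) ^ (m - 1)).
  assert (HC : 0 <= Cm) by (apply pow_le, pos_INR).
  exists (24 * Cm). split; [lra|]. intros n y Hy. assert (P0 := PI_RGT_0).
  assert (Habs : ex_RInt (fun t => Rabs (moment_integrand n m y t)) 0 PI).
  { apply (ex_RInt_continuous (V := R_CompleteNormedModule)). intros t _.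
    apply continuous_Rabs_comp, moment_integrand_continuous. }
  assert (Hf : ex_RInt (fun t => y * sin t * exp (- (y * sin t))) 0 PI).
  { apply (ex_RInt_continuous (V := R_CompleteNormedModule)). intros t _.
    apply (ex_derive_continuous (K := R_AbsRing) (V := R_NormedModule)).
    auto_derive. auto. }
  rewrite Rabs_mult, Rabs_pos_eq by (apply pow_le; lra).
  apply Rle_trans with (y ^ m * RInt (fun t => Rabs (moment_integrand n m y t)) 0 PI).
  { apply Rmult_le_compat_l; [apply pow_le; lra|].
    apply abs_RInt_le; [lra | eexists; apply is_RInt_moment]. }
  rewrite <- RInt_scal_R by exact Habs.
  apply Rle_trans with (Cm * RInt (fun t => y * sin t * exp (- (y * sin t))) 0 PI).
  - rewrite <- RInt_scal_R by exact Hf.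
    apply RInt_le; [lra | apply (ex_RInt_scal (V := R_NormedModule)), Habs
                   | apply (ex_RInt_scal (V := R_NormedModule)), Hf |].
    intros t Ht. apply moment_integrand_weighted_le; auto; lra.
  - replace (24 * Cm * Rmin y (/ y)) with (Cm * (24 * Rmin y (/ y))) by ring.
    apply Rmult_le_compat_l; [exact HC | apply RInt_sin_mul_exp_le, Hy].
Qed.

Lemma moment_comb_bound w : moment_comb w ->
  exists B, 0 <= B /\ forall n x, (1 <= n)%nat -> 0 < x ->
    Rabs (w n x) <= B * (INR n * Rmin (INR n * x) (/ (INR n * x))).
Proof.
  induction 1 as [m Hm | w1 w2 _ [B1 [P1 H1]] _ [B2 [P2 H2]] | r w Hr _ [B [P Hw]]].
  - destruct (weighted_moment_bound m Hm) as [C [HC HK]]. exists C. split; [exact HC|].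
    intros n x Hn Hx. assert (Hn1 : 1 <= INR n) by (apply (le_INR 1); auto).
    unfold scaled_moment. rewrite Rabs_mult, (Rabs_pos_eq (INR n)) by lra.
    replace (C * (INR n * Rmin (INR n * x) (/ (INR n * x))))
      with (INR n * (C * Rmin (INR n * x) (/ (INR n * x)))) by ring.
    apply Rmult_le_compat_l; [lra | apply HK; nra].
  - exists (B1 + B2). split; [lra|]. intros n x Hn Hx.
    specialize (H1 n x Hn Hx). specialize (H2 n x Hn Hx).
    eapply Rle_trans; [apply Rabs_triang | lra].
  - destruct (lorentz_poly_bounded r Hr) as [Br HBr].
    assert (0 <= Br) by exact (Rle_trans _ _ _ (Rabs_pos (r 0)) (HBr 0)).
    exists (Br * B). split; [nra|]. intros n x Hn Hx.
    rewrite Rabs_mult, Rmult_assoc.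
    apply Rmult_le_compat; auto using Rabs_pos.
Qed.

Lemma remainder_rate_le N d B (nr x : R) : 1 <= nr -> 0 < x -> 0 <= d <= 1 -> 0 <= B ->
  / nr ^ (2 * S N) * (B * (nr * Rmin (nr * x) (/ (nr * x))))
  <= (2 * B + 1) / Rpower nr (2 * INR N + 2 / 3 - d) * (Rpower x d / (1 + x)).
Proof.
  intros Hn Hx Hd HB.
  set (m := Rmin (nr * x) (/ (nr * x))).
  set (P := Rpower nr (2 * INR N + 2 / 3 - d)). set (Q := Rpower nr d).
  set (X := Rpower x d). set (D := nr ^ (2 * S N)).
  assert (HP : 0 < P) by apply exp_pos. assert (HQ : 0 < Q) by apply exp_pos.
  assert (HX : 0 < X) by apply exp_pos. assert (HD : 0 < D) by (apply pow_lt; lra).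
  assert (Hm : m * (1 + x) <= 2 * (Q * X)).
  { unfold m, Q, X. rewrite Rpower_mult_distr by lra.
    apply Rmin_inv_mul_le_Rpower; [nra | lra]. }
  assert (HPQ : P * Q * nr <= D).
  { unfold P, Q, D. rewrite <- Rpower_plus, <- Rpower_pow by lra.
    rewrite <- (Rpower_1 nr) at 2 by lra. rewrite <- Rpower_plus.
    apply Rle_Rpower; [lra|]. rewrite mult_INR, (S_INR N). simpl (INR 2). lra. }
  apply (Rmult_le_reg_r (D * P * (1 + x))); [apply Rmult_lt_0_compat; nra|].
  replace (/ D * (B * (nr * m)) * (D * P * (1 + x))) with (B * nr * P * (m * (1 + x)))
    by (field; lra).
  replace ((2 * B + 1) / P * (X / (1 + x)) * (D * P * (1 + x))) with ((2 * B + 1) * X * D)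
    by (field; lra).
  apply Rle_trans with (B * nr * P * (2 * (Q * X))).
  - apply Rmult_le_compat_l; [apply Rmult_le_pos; nra | exact Hm].
  - replace (B * nr * P * (2 * (Q * X))) with (2 * B * X * (P * Q * nr)) by ring.
    pose proof (Rmult_lt_0_compat X D HX HD).
    apply Rle_trans with (2 * B * X * D); [apply Rmult_le_compat_l; nra | lra].
Qed.

Theorem proposition3p3 :
  forall (N : nat) (delta : R), 0 <= delta < 1 / 3 ->
  exists C0 : R, 0 < C0 /\
    forall (n : nat) (x : R), (1 <= n)%nat -> 0 < x ->
      Cmod (g n N x) <=
        C0 / Rpower (INR n) (2 * INR N + 2 / 3 - delta) * (Rpower x delta / (1 + x)).
Proof.
  intros N delta Hd.
  destruct (iter_Lpsi_phi_moment_comb N) as [w [Hw Ew]].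
  destruct (moment_comb_bound w Hw) as [B [HB Bw]].
  exists (2 * B + 1). split; [lra|]. intros n x Hn Hx.
  assert (Hn1 : 1 <= INR n) by (apply (le_INR 1); exact Hn).
  assert (Hpow : 0 < / INR n ^ (2 * S N)) by (apply Rinv_0_lt_compat, pow_lt; lra).
  rewrite (g_eq_remainder n N x Hn Hx), Cmod_R, Rabs_mult, Rabs_pos_eq, Ew by (auto; lra).
  eapply Rle_trans; [apply Rmult_le_compat_l; [lra | apply Bw; auto]|].
  apply remainder_rate_le; auto; lra.
Qed.
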